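(* There exists a sequence $\{a_n\}_{n\geq 0}$ with $a_n\in\{0,1\}$ for all $n$ such that $\{a^*_n\}_{n\geq 0}$ converges to $0$ and $\{a^p_n\}_{n\geq 0}$ diverges for every $0<p<1$.
   Context: For a real sequence $\{a_n\}_{n\geq0}$ and $0<p<1$, $a^*_n=\frac{1}{n+1}\sum_{i=0}^n a_i$ and $a^p_n=\sum_{i=0}^n\binom{n}{i}p^i(1-p)^{n-i}a_i$. *)

From Stdlib Require Import Reals.
Open Scope R_scope.

Definition cesaro (a : nat -> R) (n : nat) : R :=
  / INR (n + 1) * sum_f_R0 a n.

Definition euler_mean (p : R) (a : nat -> R) (n : nat) : R :=
  sum_f_R0 (fun i => Binomial.C n i * p ^ i * (1 - p) ^ (n - i) * a i) n.

From Stdlib Require Import Reals Lia Lra Psatz ZArith.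
Open Scope R_scope.

(* The sequence is 1 exactly on the blocks [16^k, 16^k + 2*8^k) and 0 elsewhere.
   There are O(8^k) ones below 16^(k+1), so the Cesaro means tend to 0.  The Euler
   mean a^p_n is the expectation of a(X) for X binomial (n, p); by Chebyshev X lies
   within O(sqrt n) of n p with high probability.  Taking n p near 16^k + 8^k, the
   window has width O(4^k), much less than the block length 2*8^k, so a^p_n > 3/4;
   taking n p near 8*16^k lands in a run of zeros, so a^p_n < 1/4. *)

(* [binom_mean p n f] is the expectation of [f X] for X binomial with parameters
   (n, p); the recursion conditions on the outcome of one of the trials. *)
Fixpoint binom_mean (p : R) (n : nat) (f : nat -> R) : R :=
  match n with
  | O => f O
  | S n' => binom_mean p n' (fun i => p * f (S i) + (1 - p) * f i)
  end.

Lemma binom_mean_ext p n f g :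
  (forall i, f i = g i) -> binom_mean p n f = binom_mean p n g.
Proof.
  revert f g; induction n as [|n IH]; intros f g Hfg; simpl; [apply Hfg|].
  apply IH; intro i; rewrite !Hfg; reflexivity.
Qed.

Lemma binom_mean_lin p n f g x y :
  binom_mean p n (fun i => x * f i + y * g i) = x * binom_mean p n f + y * binom_mean p n g.
Proof.
  revert f g; induction n as [|n IH]; intros f g; simpl; [reflexivity|].
  rewrite <- IH; apply binom_mean_ext; intro i; ring.
Qed.

Lemma binom_mean_le p n f g : 0 <= p <= 1 ->
  (forall i, f i <= g i) -> binom_mean p n f <= binom_mean p n g.
Proof.
  intro Hp; revert f g; induction n as [|n IH]; intros f g Hfg; simpl; [apply Hfg|].
  apply IH; intro i; pose proof (Hfg i); pose proof (Hfg (S i)); nra.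
Qed.

Lemma binom_mean_const p n c : binom_mean p n (fun _ => c) = c.
Proof.
  revert c; induction n as [|n IH]; intro c; simpl; [reflexivity|].
  transitivity (binom_mean p n (fun _ => c)); [apply binom_mean_ext; intro; ring | apply IH].
Qed.

Lemma binom_mean_variance p n :
  binom_mean p n (fun i => (INR i - INR n * p) ^ 2) = INR n * p * (1 - p).
Proof.
  induction n as [|n IH]; [simpl; ring|]; cbn [binom_mean].
  transitivity (binom_mean p n (fun i => 1 * (INR i - INR n * p) ^ 2 + (p * (1 - p)) * 1)).
  - apply binom_mean_ext; intro i; rewrite !S_INR; ring.
  - rewrite binom_mean_lin, IH, binom_mean_const, S_INR; ring.
Qed.

(* Chebyshev's inequality, through the pointwise bound |f i - c| <= (i - n p)^2 / t^2. *)
Lemma binom_mean_window p n f c t : 0 <= p <= 1 -> 0 < t ->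
  (forall i, Rabs (f i - c) <= 1) ->
  (forall i : nat, Rabs (INR i - INR n * p) < t -> f i = c) ->
  Rabs (binom_mean p n f - c) <= INR n * p * (1 - p) / t ^ 2.
Proof.
  intros Hp Ht Hbnd Hwin.
  set (g i := / t ^ 2 * (INR i - INR n * p) ^ 2).
  assert (Hg : forall i, Rabs (f i - c) <= g i).
  { intro i; unfold g.
    assert (Ht2 : 0 < / t ^ 2) by (apply Rinv_0_lt_compat; nra).
    destruct (Rlt_le_dec (Rabs (INR i - INR n * p)) t) as [Hin|Hout].
    - rewrite (Hwin i Hin), Rminus_diag, Rabs_R0.
      pose proof (pow2_ge_0 (INR i - INR n * p)); nra.
    - rewrite <- (pow2_abs (INR i - INR n * p)). specialize (Hbnd i).
      assert (t ^ 2 <= Rabs (INR i - INR n * p) ^ 2) by (apply pow_incr; lra).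
      assert (/ t ^ 2 * t ^ 2 = 1) by (field; lra). nra. }
  assert (Hmean : binom_mean p n f - c = binom_mean p n (fun i => 1 * f i + (- c) * 1)).
  { rewrite binom_mean_lin, binom_mean_const; ring. }
  assert (Hvar : binom_mean p n g = INR n * p * (1 - p) / t ^ 2).
  { rewrite <- binom_mean_variance.
    transitivity (binom_mean p n (fun i => / t ^ 2 * (INR i - INR n * p) ^ 2 + 0 * 1)).
    - apply binom_mean_ext; intro i; unfold g; ring.
    - rewrite binom_mean_lin; unfold Rdiv; ring. }
  assert (Hneg : binom_mean p n (fun i => -1 * g i + 0 * 1) = - binom_mean p n g).
  { rewrite binom_mean_lin; ring. }
  rewrite Hmean, <- Hvar; apply Rabs_le; split; [rewrite <- Hneg|];
    apply binom_mean_le; try exact Hp; intro i; specialize (Hg i);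
    pose proof (Rle_abs (f i - c)); pose proof (Rle_abs (- (f i - c)));
    rewrite Rabs_Ropp in *; lra.
Qed.

(* Stdlib's [C n i] uses truncated subtraction, so it is not 0 for [i > n]. *)
Definition binom (n i : nat) : R := if (i <=? n)%nat then Binomial.C n i else 0.

Lemma C_diag n : Binomial.C n n = 1.
Proof. unfold Binomial.C; rewrite Nat.sub_diag; simpl; field; apply INR_fact_neq_0. Qed.

Lemma binom_0 n : binom n 0 = 1.
Proof.
  unfold binom, Binomial.C; simpl; rewrite Nat.sub_0_r; field; apply INR_fact_neq_0.
Qed.

Lemma binom_gt n i : (n < i)%nat -> binom n i = 0.
Proof. intro Hni; unfold binom; rewrite (proj2 (Nat.leb_gt _ _ )) by lia; reflexivity. Qed.

Lemma binom_S n i : binom (S n) (S i) = binom n i + binom n (S i).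
Proof.
  destruct (Nat.lt_total i n) as [Hlt|[->|Hgt]].
  - unfold binom; rewrite !(proj2 (Nat.leb_le _ _)) by lia.
    symmetry; apply Binomial.pascal; exact Hlt.
  - rewrite (binom_gt n (S n)) by lia; unfold binom.
    rewrite !(proj2 (Nat.leb_le _ _)) by lia; rewrite !C_diag; ring.
  - rewrite !binom_gt by lia; ring.
Qed.

Definition binom_weight (p : R) (n i : nat) : R := binom n i * p ^ i * (1 - p) ^ (n - i).

Lemma binom_weight_gt p n i : (n < i)%nat -> binom_weight p n i = 0.
Proof. intro Hni; unfold binom_weight; rewrite binom_gt by exact Hni; ring. Qed.

Lemma binom_weight_S p n i :
  binom_weight p (S n) (S i) = p * binom_weight p n i + (1 - p) * binom_weight p n (S i).
Proof.
  unfold binom_weight; rewrite binom_S; simpl (S n - S i)%nat.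
  destruct (Nat.lt_ge_cases i n) as [Hlt|Hge].
  - replace (n - i)%nat with (S (n - S i)) by lia; simpl; ring.
  - rewrite (binom_gt n (S i)) by lia; simpl; ring.
Qed.

Lemma binom_weight_0 p n : binom_weight p (S n) O = (1 - p) * binom_weight p n O.
Proof. unfold binom_weight; rewrite !binom_0, !Nat.sub_0_r; simpl; ring. Qed.

Lemma sum_binom_weight_S p n f :
  sum_f_R0 (fun i => binom_weight p (S n) i * f i) (S n)
  = sum_f_R0 (fun i => binom_weight p n i * (p * f (S i) + (1 - p) * f i)) n.
Proof.
  assert (Htail : sum_f_R0 (fun i => binom_weight p n i * f i) n
                  = sum_f_R0 (fun i => binom_weight p n i * f i) (S n)).
  { rewrite tech5, (binom_weight_gt p n (S n)) by lia; ring. }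
  rewrite decomp_sum by lia; simpl pred.
  rewrite (sum_eq _ (fun i => binom_weight p n i * f (S i) * p
                              + binom_weight p n (S i) * f (S i) * (1 - p)))
    by (intros i _; rewrite binom_weight_S; ring).
  rewrite (sum_eq (fun i => binom_weight p n i * (p * f (S i) + (1 - p) * f i))
                  (fun i => binom_weight p n i * f (S i) * p
                            + binom_weight p n i * f i * (1 - p)))
    by (intros i _; ring).
  rewrite !plus_sum, <- !scal_sum, Htail, (decomp_sum _ (S n)) by lia; simpl pred.
  rewrite binom_weight_0; ring.
Qed.

Lemma euler_mean_binom_mean p f n : euler_mean p f n = binom_mean p n f.
Proof.
  transitivity (sum_f_R0 (fun i => binom_weight p n i * f i) n).
  - unfold euler_mean, binom_weight, binom; apply sum_eq; intros i Hi.
    rewrite (proj2 (Nat.leb_le _ _)) by exact Hi; reflexivity.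
  - revert f; induction n as [|n IH]; intro f.
    + simpl; unfold binom_weight; rewrite binom_0; simpl; ring.
    + rewrite sum_binom_weight_S, IH; reflexivity.
Qed.

Lemma sum_f_R0_add_le (f : nat -> R) b j :
  (forall i, f i <= 1) -> sum_f_R0 f (b + j) <= sum_f_R0 f b + INR j.
Proof.
  intro Hf; induction j as [|j IH].
  - rewrite Nat.add_0_r; simpl; lra.
  - rewrite Nat.add_succ_r, tech5, S_INR; specialize (Hf (S (b + j))); lra.
Qed.

Lemma sum_f_R0_add_zero (f : nat -> R) b j :
  (forall i, (b < i <= b + j)%nat -> f i = 0) -> sum_f_R0 f (b + j) = sum_f_R0 f b.
Proof.
  induction j as [|j IH]; intro Hf.
  - rewrite Nat.add_0_r; reflexivity.
  - rewrite Nat.add_succ_r, tech5, Hf by lia.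
    rewrite IH by (intros; apply Hf; lia); ring.
Qed.

Definition block (i : nat) : nat := Nat.log2 i / 4.

Lemma block_spec i : (0 < i)%nat -> (16 ^ block i <= i < 16 ^ S (block i))%nat.
Proof.
  intro Hi; pose proof (Nat.log2_spec i Hi) as Hlog.
  assert (H16 : forall k, (16 ^ k = 2 ^ (4 * k))%nat)
    by (intro; rewrite Nat.pow_mul_r; reflexivity).
  rewrite !H16; unfold block.
  pose proof (Nat.div_mod_eq (Nat.log2 i) 4); pose proof (Nat.mod_upper_bound (Nat.log2 i) 4).
  split.
  - eapply Nat.le_trans; [|apply Hlog]; apply Nat.pow_le_mono_r; lia.
  - eapply Nat.lt_le_trans; [apply Hlog|]; apply Nat.pow_le_mono_r; lia.
Qed.

Lemma block_eq k i : (16 ^ k <= i < 16 ^ S k)%nat -> block i = k.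
Proof.
  intro Hk; assert (Hi : (0 < i)%nat) by (pose proof (Nat.pow_nonzero 16 k); lia).
  pose proof (block_spec i Hi).
  assert (16 ^ k < 16 ^ S (block i) /\ 16 ^ block i < 16 ^ S k)%nat as [H1 H2] by lia.
  apply Nat.pow_lt_mono_r_iff in H1, H2; lia.
Qed.

Definition block_seq (i : nat) : R :=
  if (i <? 16 ^ block i + 2 * 8 ^ block i)%nat then 1 else 0.

Lemma block_seq_01 i : block_seq i = 0 \/ block_seq i = 1.
Proof. unfold block_seq; destruct (_ <? _)%nat; auto. Qed.

Lemma block_seq_bounds i : 0 <= block_seq i <= 1.
Proof. destruct (block_seq_01 i) as [-> | ->]; lra. Qed.

Lemma block_seq_one k i : (16 ^ k <= i < 16 ^ k + 2 * 8 ^ k)%nat -> block_seq i = 1.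
Proof.
  intro Hi; unfold block_seq; rewrite (block_eq k i).
  - rewrite (proj2 (Nat.ltb_lt _ _)) by lia; reflexivity.
  - pose proof (Nat.pow_le_mono_l 8 16 k); rewrite Nat.pow_succ_r'; lia.
Qed.

Lemma block_seq_zero k i : (16 ^ k + 2 * 8 ^ k <= i < 16 ^ S k)%nat -> block_seq i = 0.
Proof.
  intro Hi; unfold block_seq; rewrite (block_eq k i) by lia.
  rewrite (proj2 (Nat.ltb_ge _ _)) by lia; reflexivity.
Qed.

Lemma INR_pow16 k : INR (16 ^ k) = INR (2 ^ k) ^ 4.
Proof. rewrite <- pow_INR, <- !Nat.pow_mul_r, Nat.mul_comm, Nat.pow_mul_r; reflexivity. Qed.

Lemma INR_pow8 k : INR (8 ^ k) = INR (2 ^ k) ^ 3.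
Proof. rewrite <- pow_INR, <- !Nat.pow_mul_r, Nat.mul_comm, Nat.pow_mul_r; reflexivity. Qed.

Lemma partial_sum_in_block k n : (16 ^ k <= n < 16 ^ S k)%nat ->
  sum_f_R0 block_seq n <= sum_f_R0 block_seq (16 ^ k - 1) + 2 * INR (8 ^ k).
Proof.
  intro Hn; pose proof (Nat.pow_nonzero 16 k); pose proof (Nat.pow_nonzero 8 k).
  set (m := Nat.min n (16 ^ k + 2 * 8 ^ k - 1)).
  assert (Hzeros : sum_f_R0 block_seq n = sum_f_R0 block_seq m).
  { replace n with (m + (n - m))%nat at 1 by lia.
    apply sum_f_R0_add_zero; intros i Hi; apply (block_seq_zero k); lia. }
  rewrite Hzeros; replace m with (16 ^ k - 1 + (m - (16 ^ k - 1)))%nat at 1 by lia.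
  eapply Rle_trans; [apply sum_f_R0_add_le; intro; apply block_seq_bounds|].
  apply Rplus_le_compat_l.
  replace (2 * INR (8 ^ k)) with (INR (2 * 8 ^ k)) by (rewrite mult_INR; simpl; ring).
  apply le_INR; lia.
Qed.

Lemma partial_sum_before_block k : sum_f_R0 block_seq (16 ^ k - 1) <= INR (8 ^ k).
Proof.
  induction k as [|k IH].
  - simpl; pose proof (block_seq_bounds 0); lra.
  - pose proof (Nat.pow_nonzero 16 k).
    eapply Rle_trans; [apply (partial_sum_in_block k); rewrite Nat.pow_succ_r'; lia|].
    rewrite Nat.pow_succ_r', mult_INR; simpl (INR 8).
    pose proof (pos_INR (8 ^ k)); lra.
Qed.

Lemma cesaro_block_seq_le n : (0 < n)%nat -> cesaro block_seq n <= 3 / INR (2 ^ block n).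
Proof.
  intro Hn; pose proof (block_spec n Hn) as Hblk.
  set (M := INR (2 ^ block n)).
  assert (HM : 0 < M) by (apply lt_0_INR; pose proof (Nat.pow_nonzero 2 (block n)); lia).
  assert (Hsum : sum_f_R0 block_seq n <= 3 * M ^ 3).
  { pose proof (partial_sum_in_block _ _ Hblk).
    pose proof (partial_sum_before_block (block n)).
    unfold M; rewrite <- INR_pow8; lra. }
  assert (Hlen : M ^ 4 <= INR (n + 1)) by (unfold M; rewrite <- INR_pow16; apply le_INR; lia).
  assert (Hsum0 : 0 <= sum_f_R0 block_seq n) by (apply cond_pos_sum; apply block_seq_bounds).
  unfold cesaro; apply Rle_trans with (/ M ^ 4 * (3 * M ^ 3)).
  - apply Rmult_le_compat; try lra.
    + left; apply Rinv_0_lt_compat, lt_0_INR; lia.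
    + apply Rinv_le_contravar; [apply pow_lt|]; lra.
  - right; field; lra.
Qed.

Lemma cesaro_block_seq : Un_cv (cesaro block_seq) 0.
Proof.
  intros eps Heps.
  destruct (archimed_cor1 (eps / 3)) as [K [HK HK0]]; [lra|].
  exists (16 ^ K)%nat; intros n Hn; unfold R_dist; rewrite Rminus_0_r.
  pose proof (Nat.pow_nonzero 16 K).
  assert (Hn0 : (0 < n)%nat) by lia.
  pose proof (block_spec n Hn0) as Hblk.
  assert (HKk : (K <= 2 ^ block n)%nat).
  { assert (16 ^ K < 16 ^ S (block n))%nat as HKb by lia.
    apply Nat.pow_lt_mono_r_iff in HKb; [|lia].
    pose proof (Nat.pow_gt_lin_r 2 (block n)); lia. }
  assert (HKpos : 0 < INR K) by (apply lt_0_INR; lia).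
  assert (Hinv : / INR (2 ^ block n) <= / INR K)
    by (apply Rinv_le_contravar; [exact HKpos | apply le_INR, HKk]).
  pose proof (cesaro_block_seq_le n Hn0).
  rewrite Rabs_pos_eq.
  - unfold Rdiv in *; lra.
  - unfold cesaro; apply Rmult_le_pos.
    + left; apply Rinv_0_lt_compat, lt_0_INR; lia.
    + apply cond_pos_sum, block_seq_bounds.
Qed.

Lemma exists_index_mean p c : 0 < p <= 1 -> 0 <= c -> exists n : nat, c < INR n * p <= c + 1.
Proof.
  intros Hp Hc; destruct (archimed (c / p)) as [Hup1 Hup2].
  assert (Hcp : 0 <= c / p)
    by (unfold Rdiv; apply Rmult_le_pos; [|left; apply Rinv_0_lt_compat]; lra).
  assert (Hz : (0 <= up (c / p))%Z) by (apply le_IZR; lra).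
  exists (Z.to_nat (up (c / p))); rewrite INR_IZR_INZ, Z2Nat.id by exact Hz.
  assert (c = c / p * p) by (field; lra).
  split; nra.
Qed.

Lemma index_ge_of_mean_gt_pow16 p n N k : 0 < p <= 1 -> (N <= k)%nat ->
  INR (16 ^ k) < INR n * p -> (N <= n)%nat.
Proof.
  intros Hp Hk Hn; pose proof (Nat.pow_gt_lin_r 16 k).
  assert (Hlt : INR (16 ^ k) < INR n) by (pose proof (pos_INR n); nra).
  apply INR_lt in Hlt; lia.
Qed.

Lemma variance_ratio_lt_quarter n p t : 0 <= p <= 1 -> 0 < t ->
  4 * (INR n * p) < t ^ 2 -> INR n * p * (1 - p) / t ^ 2 < 1 / 4.
Proof.
  intros Hp Ht Hnt; pose proof (pos_INR n).
  apply Rmult_lt_reg_r with (t ^ 2); [nra|].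
  unfold Rdiv; rewrite Rmult_assoc, Rinv_l by nra; nra.
Qed.

Lemma Rabs_sub_unit_interval x y : 0 <= x <= 1 -> 0 <= y <= 1 -> Rabs (x - y) <= 1.
Proof. intros Hx Hy; apply Rabs_le; lra. Qed.

Lemma not_cv_oscillating (u : nat -> R) :
  (forall N, exists n, (N <= n)%nat /\ 3 / 4 < u n) ->
  (forall N, exists n, (N <= n)%nat /\ u n < 1 / 4) ->
  ~ (exists l, Un_cv u l).
Proof.
  intros Hhigh Hlow [l Hl]; destruct (Hl (1 / 4)) as [N HN]; [lra|].
  destruct (Hhigh N) as [n1 [Hn1 Hu1]]; destruct (Hlow N) as [n2 [Hn2 Hu2]].
  specialize (HN n1 Hn1) as Hd1; specialize (HN n2 Hn2) as Hd2; unfold R_dist in *.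
  apply Rabs_def2 in Hd1, Hd2; lra.
Qed.

Lemma euler_mean_block_seq_high p N : 0 < p < 1 ->
  exists n, (N <= n)%nat /\ 3 / 4 < euler_mean p block_seq n.
Proof.
  intro Hp; set (k := (N + 3)%nat); set (M := INR (2 ^ k)).
  assert (HM : 8 <= M).
  { unfold M; replace 8 with (INR (2 ^ 3)) by (simpl; ring).
    apply le_INR, Nat.pow_le_mono_r; unfold k; lia. }
  assert (HM3 : 512 <= M ^ 3) by (replace 512 with (8 ^ 3) by ring; apply pow_incr; lra).
  destruct (exists_index_mean p (M ^ 4 + M ^ 3)) as [n [Hn1 Hn2]]; [lra|nra|].
  exists n; split.
  - apply (index_ge_of_mean_gt_pow16 p n N k); [lra | unfold k; lia |].
    rewrite INR_pow16; fold M; nra.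
  - assert (Hwin : Rabs (binom_mean p n block_seq - 1)
                   <= INR n * p * (1 - p) / (M ^ 3 - 1) ^ 2).
    { apply binom_mean_window; try lra.
      - intro i; apply Rabs_sub_unit_interval; [apply block_seq_bounds|lra].
      - intros i Hi; apply Rabs_def2 in Hi; apply (block_seq_one k); split.
        + apply INR_le; rewrite INR_pow16; fold M; nra.
        + apply INR_lt; rewrite plus_INR, mult_INR, INR_pow16, INR_pow8; fold M; simpl (INR 2).
          lra. }
    assert (Hratio : INR n * p * (1 - p) / (M ^ 3 - 1) ^ 2 < 1 / 4).
    { apply variance_ratio_lt_quarter; try lra.
      assert (M ^ 4 >= 8 * M ^ 3) by nra. assert (M ^ 6 = M ^ 3 * M ^ 3) by ring. nra. }
    rewrite euler_mean_binom_mean.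
    assert (Habs : Rabs (binom_mean p n block_seq - 1) < 1 / 4) by lra.
    apply Rabs_def2 in Habs; lra.
Qed.

Lemma euler_mean_block_seq_low p N : 0 < p < 1 ->
  exists n, (N <= n)%nat /\ euler_mean p block_seq n < 1 / 4.
Proof.
  intro Hp; set (k := (N + 2)%nat); set (M := INR (2 ^ k)).
  assert (HM : 4 <= M).
  { unfold M; replace 4 with (INR (2 ^ 2)) by (simpl; ring).
    apply le_INR, Nat.pow_le_mono_r; unfold k; lia. }
  assert (HM3 : 64 <= M ^ 3) by (replace 64 with (4 ^ 3) by ring; apply pow_incr; lra).
  assert (HM4 : M ^ 4 >= 4 * M ^ 3) by nra.
  destruct (exists_index_mean p (8 * M ^ 4)) as [n [Hn1 Hn2]]; [lra|nra|].
  exists n; split.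
  - apply (index_ge_of_mean_gt_pow16 p n N k); [lra | unfold k; lia |].
    rewrite INR_pow16; fold M; nra.
  - assert (Hwin : Rabs (binom_mean p n block_seq - 0)
                   <= INR n * p * (1 - p) / (4 * M ^ 4 - 1) ^ 2).
    { apply binom_mean_window; try lra.
      - intro i; apply Rabs_sub_unit_interval; [apply block_seq_bounds|lra].
      - intros i Hi; apply Rabs_def2 in Hi; apply (block_seq_zero k); split.
        + apply INR_le; rewrite plus_INR, mult_INR, INR_pow16, INR_pow8; fold M; simpl (INR 2).
          lra.
        + apply INR_lt; rewrite Nat.pow_succ_r', mult_INR, INR_pow16; fold M.
          replace (INR 16) with 16 by (simpl; ring); lra. }
    assert (Hratio : INR n * p * (1 - p) / (4 * M ^ 4 - 1) ^ 2 < 1 / 4).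
    { apply variance_ratio_lt_quarter; try lra.
      assert (M ^ 4 >= 256) by lra. nra. }
    rewrite euler_mean_binom_mean.
    assert (Habs : Rabs (binom_mean p n block_seq - 0) < 1 / 4) by lra.
    apply Rabs_def2 in Habs; lra.
Qed.

Theorem proposition4 :
  exists a : nat -> R,
    (forall n, a n = 0 \/ a n = 1) /\
    Un_cv (cesaro a) 0 /\
    (forall p : R, 0 < p < 1 -> ~ (exists l : R, Un_cv (euler_mean p a) l)).
Proof.
  exists block_seq; split; [exact block_seq_01|]; split; [exact cesaro_block_seq|].
  intros p Hp; apply not_cv_oscillating; intro N.
  - exact (euler_mean_block_seq_high p N Hp).
  - exact (euler_mean_block_seq_low p N Hp).
Qed.
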